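(* Assume the setting of the context. Then for all sufficiently small $\epsilon>0$ there exist numbers $0<\widetilde{x}_-<\widetilde{x}_+$, depending only on $C_0,C_2,C_3,\epsilon$ (and the chosen function $\lambda$), such that for every $\sigma\in\Sigma$ $$x\in[\widetilde{x}_-,\widetilde{x}_+]\quad\Longrightarrow\quad Q^\epsilon_\sigma\cdot(D_{\kappa_\sigma}\cdot x)\;\le\;\Lambda\,(D_{\kappa_\sigma}\cdot x),$$ and moreover $$\lim_{\epsilon\to0}\frac{\lambda\,\widetilde{x}_-}{\epsilon}=\frac{C_2e^{2C_0}}{2C_0},\qquad\lim_{\epsilon\to0}\frac{\epsilon\,\widetilde{x}_+}{\lambda}=\frac{2C_0}{C_2e^{2C_0}}.$$
   Context: Let $(\Sigma,\mathbf{p})$ be a probability space. For each $\sigma\in\Sigma$ and $\epsilon\in[-1,1]$ let real numbers $a_\sigma,b_\sigma$, $\kappa_\sigma>0$ and $\alpha^\epsilon_\sigma,\beta^\epsilon_\sigma,\gamma^\epsilon_\sigma,\delta^\epsilon_\sigma$ be given, with $A^\epsilon_\sigma=\begin{pmatrix}\alpha^\epsilon_\sigma&\beta^\epsilon_\sigma\\ \gamma^\epsilon_\sigma&\delta^\epsilon_\sigma\end{pmatrix}$. Assume that for all $\sigma$: $|\log(\kappa_\sigma)|\le C_0$, $a_\sigma-|b_\sigma|\ge C_1$, $a_\sigma+|b_\sigma|\le C_2$, and $\|A^\epsilon_\sigma\|\le C_3$ for $|\epsilon|\le1$, with constants $C_0,C_1,C_2,C_3\in(0,\infty)$. On $\mathbb{R}\cup\{\infty\}$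 define $D_{\kappa}\cdot x=\kappa^2x$ and $$Q^\epsilon_\sigma\cdot x=\frac{(1+\epsilon^2\alpha^\epsilon_\sigma)x+(a_\sigma-b_\sigma-\epsilon\beta^\epsilon_\sigma)\epsilon}{1+\epsilon^2\delta^\epsilon_\sigma-(a_\sigma+b_\sigma+\epsilon\gamma^\epsilon_\sigma)\epsilon x}.$$ Let $\lambda=\lambda(\epsilon)>0$ be a function of $\epsilon>0$ with $\lim_{\epsilon\to0}\lambda=0$ and $\lim_{\epsilon\to0}\frac{\log(\lambda)}{\log(\epsilon)}=0$ (hence also $\epsilon/\lambda\to0$), and set $\Lambda=e^{2C_0\lambda}$. *)

From Stdlib Require Import Reals Lra.
From Coquelicot Require Import Coquelicot.
Open Scope R_scope.

(* The extended line R ∪ {∞}: [Some x] is the real x, [None] is ∞. *)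
Definition RP1 := option R.

Definition Dact (kappa : R) (p : RP1) : RP1 :=
  match p with Some x => Some (kappa ^ 2 * x) | None => None end.

Definition mobius (m11 m12 m21 m22 : R) (p : RP1) : RP1 :=
  match p with
  | Some x => let d := m21 * x + m22 in
              if Req_EM_T d 0 then None else Some ((m11 * x + m12) / d)
  | None => if Req_EM_T m21 0 then None else Some (m11 / m21)
  end.

Definition Qact (eps a b al be ga de : R) (p : RP1) : RP1 :=
  mobius (1 + eps ^ 2 * al) ((a - b - eps * be) * eps)
         (- ((a + b + eps * ga) * eps)) (1 + eps ^ 2 * de) p.

Definition le_RP1 (p : RP1) (r : R) : Prop :=
  match p with Some q => q <= r | None => False end.

Definition opnorm_le (al be ga de c : R) : Prop :=
  forall u v : R, sqrt ((al * u + be * v) ^ 2 + (ga * u + de * v) ^ 2)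
                  <= c * sqrt (u ^ 2 + v ^ 2).

From Stdlib Require Import Reals Lra.
From Coquelicot Require Import Coquelicot.
Open Scope R_scope.

(* Put [y = kappa^2 x].  Bounding the entries of [A] by [C3] and [a +- b] by
   [C2], the claim [Q . y <= Lambda y] (with a positive denominator) follows from
     [Lambda (C2 + eps C3) eps (y^2 + 1) <= (2 C0 lambda - 3 C3 eps^2) y],
   i.e. from [w (y^2 + 1) <= y] with [w ~ C2 eps / (2 C0 lambda)].  The
   hypothesis on [log lambda / log eps] gives [eps < lambda^2] for small [eps],
   hence [eps / lambda < lambda -> 0] and [w -> 0].  The quadratic inequality
   then holds on [[r, 1/r]] for [r = w (1 + w)], and [e^(-2 C0) <= kappa^2 <= e^(2 C0)]
   shows that [x] in [[e^(2 C0) r, e^(-2 C0) / r]] puts [y] in [[r, 1/r]].  Since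
   [r ~ w], these endpoints have the stated asymptotics. *)

Lemma Rabs_le_bounds x c : Rabs x <= c -> - c <= x <= c.
Proof. split_Rabs; lra. Qed.

Lemma Rabs_le_sqrt_sum_sq x z : Rabs x <= sqrt (x ^ 2 + z ^ 2).
Proof.
  rewrite <- sqrt_Rsqr_abs; unfold Rsqr.
  apply sqrt_le_1_alt; nra.
Qed.

Lemma opnorm_le_entries al be ga de c : opnorm_le al be ga de c ->
  Rabs al <= c /\ Rabs be <= c /\ Rabs ga <= c /\ Rabs de <= c.
Proof.
  intros H.
  assert (Hcol1 := H 1 0); assert (Hcol2 := H 0 1).
  replace ((al * 1 + be * 0) ^ 2 + (ga * 1 + de * 0) ^ 2) with (al ^ 2 + ga ^ 2) in Hcol1
    by ring.
  replace ((al * 0 + be * 1) ^ 2 + (ga * 0 + de * 1) ^ 2) with (be ^ 2 + de ^ 2) in Hcol2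
    by ring.
  replace (1 ^ 2 + 0 ^ 2) with 1 in Hcol1 by ring.
  replace (0 ^ 2 + 1 ^ 2) with 1 in Hcol2 by ring.
  rewrite sqrt_1, Rmult_1_r in Hcol1, Hcol2.
  pose proof (Rabs_le_sqrt_sum_sq al ga); pose proof (Rabs_le_sqrt_sum_sq be de).
  assert (Hga := Rabs_le_sqrt_sum_sq ga al); assert (Hde := Rabs_le_sqrt_sum_sq de be).
  rewrite Rplus_comm in Hga, Hde.
  repeat split; lra.
Qed.

Lemma exp_le_compat x y : x <= y -> exp x <= exp y.
Proof. intros [Hlt | ->]; [left; exact (exp_increasing _ _ Hlt) | right; reflexivity]. Qed.

Lemma exp_le_2 s : 0 <= s <= 1 / 2 -> exp s <= 2.
Proof.
  intros Hs.
  assert (Hinv : exp s * exp (- s) = 1) by (rewrite <- exp_plus, Rplus_opp_r; exact exp_0).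
  pose proof (exp_ineq1_le (- s)); pose proof (exp_pos s).
  nra.
Qed.

Lemma pow2_bounds_of_Rabs_ln k C : 0 < k -> Rabs (ln k) <= C ->
  / exp (2 * C) <= k ^ 2 <= exp (2 * C).
Proof.
  intros Hk Hln; apply Rabs_le_bounds in Hln.
  rewrite <- exp_Ropp.
  replace (k ^ 2) with (exp (2 * ln k)).
  2: { replace (2 * ln k) with (ln k + ln k) by ring; rewrite exp_plus, exp_ln; [ring | exact Hk]. }
  split; apply exp_le_compat; lra.
Qed.

Lemma mobius_Some_le m11 m12 m21 m22 y z :
  0 < m21 * y + m22 -> m11 * y + m12 <= z * (m21 * y + m22) ->
  le_RP1 (mobius m11 m12 m21 m22 (Some y)) z.
Proof.
  intros Hd Hn; simpl.
  destruct (Req_EM_T _ 0) as [H0 | _]; [lra |]; simpl.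
  apply Rle_div_l; lra.
Qed.

Lemma Qact_Some_le e a b al be ga de C2 C3 s L y :
  0 < e <= 1 -> 0 < y -> 0 <= C2 ->
  Rabs al <= C3 -> Rabs be <= C3 -> Rabs ga <= C3 -> Rabs de <= C3 ->
  a + Rabs b <= C2 -> 0 <= s < 1 -> 1 + s <= L <= 2 ->
  L * (C2 + e * C3) * e * (y ^ 2 + 1) <= (s - 3 * C3 * e ^ 2) * y ->
  le_RP1 (Qact e a b al be ga de (Some y)) (L * y).
Proof.
  intros He Hy HC2 Hal Hbe Hga Hde Hab Hs HL Hquad.
  apply Rabs_le_bounds in Hal, Hbe, Hga, Hde.
  pose proof (Rle_abs b); pose proof (Rle_abs (- b)); rewrite Rabs_Ropp in *.
  set (c := C2 + e * C3) in *.
  assert (Hc : 0 <= c * e) by (unfold c; nra).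
  assert (Hsum : a + b + e * ga <= c) by (unfold c; nra).
  assert (Hdiff : a - b - e * be <= c) by (unfold c; nra).
  assert (Hcey : c * e * y <= s - 3 * C3 * e ^ 2).
  { apply (Rmult_le_reg_r y); [exact Hy |].
    assert (0 <= c * e * (y ^ 2 + 1) * (L - 1)) by (apply Rmult_le_pos; nra).
    nra. }
  assert (Hey : 0 < e * y) by nra.
  assert (Hsum_y : (a + b + e * ga) * e * y <= c * e * y).
  { rewrite !Rmult_assoc; apply Rmult_le_compat_r; nra. }
  assert (Hde2 : - C3 * e ^ 2 <= e ^ 2 * de) by nra.
  apply mobius_Some_le; [nra |].
  assert (Hsum_Ly : L * y * (a + b + e * ga) * e * y <= L * y * c * e * y).
  { rewrite !(Rmult_assoc (L * y)); apply Rmult_le_compat_l; nra. }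
  assert (Hde_Ly : - 2 * C3 * e ^ 2 * y <= L * e ^ 2 * de * y).
  { assert (0 <= e ^ 2 * y * (L * de + 2 * C3)) by (apply Rmult_le_pos; nra). nra. }
  assert (Hal_y : e ^ 2 * al * y <= C3 * e ^ 2 * y) by (apply Rmult_le_compat_r; nra).
  assert (Hdiff_e : (a - b - e * be) * e <= c * e) by (apply Rmult_le_compat_r; lra).
  assert (Hc_L : c * e <= L * c * e) by nra.
  nra.
Qed.

(* On [[r, 1/r]] the function [y / (y^2 + 1)] is bounded below by its value at [r]. *)
Lemma quadratic_le_on_window w r y : 0 < r -> w * (r ^ 2 + 1) <= r ->
  r <= y <= / r -> w * (y ^ 2 + 1) <= y.
Proof.
  intros Hr Hwr [Hy1 Hy2].
  assert (Hry : r * y <= 1) by (apply (Rmult_le_compat_l r) in Hy2; [rewrite Rinv_r in Hy2 |]; lra).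
  assert (Hcross : r * (y ^ 2 + 1) <= y * (r ^ 2 + 1)) by nra.
  apply (Rmult_le_reg_r (r ^ 2 + 1)); [nra |].
  assert (w * (r ^ 2 + 1) * (y ^ 2 + 1) <= r * (y ^ 2 + 1))
    by (apply Rmult_le_compat_r; nra).
  nra.
Qed.

Lemma quadratic_le_at_perturbed_coef w : 0 <= w <= 1 / 4 ->
  w * ((w * (1 + w)) ^ 2 + 1) <= w * (1 + w).
Proof. intros Hw; nra. Qed.

Lemma scaled_window k x c r : 0 < r -> 0 < c -> / c <= k ^ 2 <= c ->
  c * r <= x <= / c / r -> r <= k ^ 2 * x <= / r.
Proof.
  intros Hr Hc [Hk1 Hk2] [Hx1 Hx2].
  assert (Hcinv : 0 < / c) by (apply Rinv_0_lt_compat; exact Hc).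
  assert (Hx : 0 < x) by nra.
  split.
  - apply Rle_trans with (/ c * (c * r)); [right; field; lra |].
    apply Rmult_le_compat; nra.
  - apply Rle_trans with (c * (/ c / r)); [| right; field; lra].
    apply Rmult_le_compat; nra.
Qed.

Lemma scaled_endpoints_lt E r : 0 < E -> 0 < r < / E -> 0 < E * r < / E / r.
Proof.
  intros HE [Hr HrE].
  assert (HEr : E * r < 1) by (apply (Rmult_lt_compat_l E) in HrE; [rewrite Rinv_r in HrE |]; lra).
  split; [nra |].
  apply Rlt_trans with 1; [exact HEr |].
  apply (Rmult_lt_reg_r r); [exact Hr |].
  replace (/ E / r * r) with (/ E) by (field; lra).
  lra.
Qed.

Section FilterLimits.

Context {T : Type} {F : (T -> Prop) -> Prop} {FF : Filter F}.

Lemma filterlim_Rplus (f g : T -> R) a b :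
  filterlim f F (locally a) -> filterlim g F (locally b) ->
  filterlim (fun x => f x + g x) F (locally (a + b)).
Proof. intros Hf Hg; exact (filterlim_comp_2 _ _ _ Hf Hg (filterlim_plus a b)). Qed.

Lemma filterlim_Rmult (f g : T -> R) a b :
  filterlim f F (locally a) -> filterlim g F (locally b) ->
  filterlim (fun x => f x * g x) F (locally (a * b)).
Proof. intros Hf Hg; exact (filterlim_comp_2 _ _ _ Hf Hg (filterlim_mult a b)). Qed.

Lemma filterlim_Rinv (f : T -> R) a : filterlim f F (locally a) -> a <> 0 ->
  filterlim (fun x => / f x) F (locally (/ a)).
Proof. intros Hf Ha; eapply filterlim_comp; [exact Hf | exact (continuous_Rinv a Ha)]. Qed.

Lemma filterlim_Rdiv (f g : T -> R) a b :
  filterlim f F (locally a) -> filterlim g F (locally b) -> b <> 0 ->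
  filterlim (fun x => f x / g x) F (locally (a / b)).
Proof. intros Hf Hg Hb; apply filterlim_Rmult; [exact Hf | exact (filterlim_Rinv g b Hg Hb)]. Qed.

Lemma filterlim_Rminus (f g : T -> R) a b :
  filterlim f F (locally a) -> filterlim g F (locally b) ->
  filterlim (fun x => f x - g x) F (locally (a - b)).
Proof.
  intros Hf Hg; apply filterlim_Rplus; [exact Hf |].
  eapply filterlim_comp; [exact Hg | exact (filterlim_opp b)].
Qed.

Lemma filterlim_exp (f : T -> R) a : filterlim f F (locally a) ->
  filterlim (fun x => exp (f x)) F (locally (exp a)).
Proof. intros Hf; eapply filterlim_comp; [exact Hf | exact (continuous_exp a)]. Qed.

Lemma filterlim_locally_eq (f : T -> R) (a b : R) :
  filterlim f F (locally a) -> a = b -> filterlim f F (locally b).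
Proof. intros Hf <-; exact Hf. Qed.

Lemma filterlim_eventually_lt (f : T -> R) l d :
  filterlim f F (locally l) -> l < d -> F (fun x => f x < d).
Proof. intros Hf Hld; exact (Hf _ (locally_open _ _ (open_lt d) (fun _ h => h) l Hld)). Qed.

End FilterLimits.

Lemma at_right_0_pos : at_right 0 (fun e => 0 < e).
Proof. unfold at_right, within; apply filter_forall; intros e He; exact He. Qed.

Lemma filterlim_at_right_id : filterlim (fun e => e) (at_right 0) (locally 0).
Proof. intros P HP; exact (filter_imp _ _ (fun e He _ => He) HP). Qed.

Lemma at_right_0_interval (P : R -> Prop) : at_right 0 P ->
  exists e0, 0 < e0 /\ forall e, 0 < e < e0 -> P e.
Proof.
  intros [d Hd]; exists d; split; [apply cond_pos |].
  intros e He; apply Hd; [| lra].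
  change (Rabs (e - 0) < d); rewrite Rminus_0_r, Rabs_right; lra.
Qed.

Ltac filterlim_arith :=
  repeat first
    [ apply filterlim_const | exact filterlim_at_right_id
    | match goal with H : filterlim _ _ _ |- _ => exact H end
    | apply filterlim_Rdiv | apply filterlim_Rminus | apply filterlim_Rplus
    | apply filterlim_Rmult | apply filterlim_exp ].

Lemma lt_sq_of_ln_ratio e t : 0 < e < 1 -> 0 < t -> ln t / ln e < 1 / 2 -> e < t ^ 2.
Proof.
  intros He Ht Hratio.
  assert (Hln : ln e < 0) by (rewrite <- ln_1; apply ln_increasing; lra).
  assert (Hlnt : ln e < 2 * ln t).
  { replace (ln t) with (ln t / ln e * ln e) by (field; lra); nra. }
  apply ln_lt_inv; [lra | apply pow_lt; lra |].
  replace (t ^ 2) with (t * t) by ring; rewrite ln_mult; lra.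
Qed.

Lemma ratio_lim_of_ln_ratio (lam : R -> R) :
  (forall e, 0 < e -> 0 < lam e) ->
  filterlim lam (at_right 0) (locally 0) ->
  filterlim (fun e => ln (lam e) / ln e) (at_right 0) (locally 0) ->
  filterlim (fun e => e / lam e) (at_right 0) (locally 0).
Proof.
  intros Hpos Hlim Hlog.
  apply (filterlim_le_le (fun _ => 0) _ lam (Finite 0)); [| apply filterlim_const | exact Hlim].
  assert (Hlog_small := filterlim_eventually_lt _ 0 (1 / 2) Hlog ltac:(lra)).
  assert (Hsmall := filterlim_eventually_lt _ 0 1 filterlim_at_right_id Rlt_0_1).
  generalize (filter_and _ _ Hlog_small (filter_and _ _ Hsmall at_right_0_pos)).
  apply filter_imp; intros e (Hratio & He1 & He0).
  pose proof (Hpos e He0) as Ht.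
  pose proof (lt_sq_of_ln_ratio e (lam e) (conj He0 He1) Ht Hratio).
  split; [apply Rlt_le, Rdiv_lt_0_compat; lra |].
  apply Rle_div_l; nra.
Qed.

Section Window.

Variables (C0 C2 C3 : R) (lam : R -> R).
Hypotheses (hC0 : 0 < C0) (hC2 : 0 < C2) (hC3 : 0 < C3)
  (hlam_pos : forall e, 0 < e -> 0 < lam e)
  (hlam_lim : filterlim lam (at_right 0) (locally 0))
  (hratio : filterlim (fun e => e / lam e) (at_right 0) (locally 0)).

Definition quad_coef e :=
  exp (2 * C0 * lam e) * (C2 + e * C3) * e / (2 * C0 * lam e - 3 * C3 * e ^ 2).

Definition window_lo e := quad_coef e * (1 + quad_coef e).

Lemma denominator_eventually :
  at_right 0 (fun e => 0 < e /\ 0 < lam e /\ 3 * C3 * e * (e / lam e) < C0 /\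
                       0 < 2 * C0 * lam e - 3 * C3 * e ^ 2).
Proof.
  assert (Hsmall : filterlim (fun e => 3 * C3 * e * (e / lam e)) (at_right 0) (locally 0)).
  { eapply filterlim_locally_eq; [filterlim_arith | ring]. }
  generalize (filter_and _ _ at_right_0_pos (filterlim_eventually_lt _ 0 C0 Hsmall hC0)).
  apply filter_imp; intros e [He Hsm].
  pose proof (hlam_pos e He) as Hl.
  repeat split; try assumption.
  replace (3 * C3 * e ^ 2) with (lam e * (3 * C3 * e * (e / lam e))) by (field; lra).
  nra.
Qed.

Lemma scaled_quad_coef_lim :
  filterlim (fun e => lam e * quad_coef e / e) (at_right 0) (locally (C2 / (2 * C0))).
Proof.
  apply filterlim_ext_loc
    with (fun e => exp (2 * C0 * lam e) * (C2 + e * C3) / (2 * C0 - 3 * C3 * e * (e / lam e))).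
  - generalize denominator_eventually; apply filter_imp; intros e (He & Hl & Hsm & Hd).
    unfold quad_coef; field; repeat split; lra.
  - eapply filterlim_locally_eq; [filterlim_arith |].
    + lra.
    + rewrite !Rmult_0_r, exp_0; field; lra.
Qed.

Lemma quad_coef_lim : filterlim quad_coef (at_right 0) (locally 0).
Proof.
  apply filterlim_ext_loc with (fun e => e / lam e * (lam e * quad_coef e / e)).
  - generalize denominator_eventually; apply filter_imp; intros e (He & Hl & _).
    field; lra.
  - pose proof scaled_quad_coef_lim.
    eapply filterlim_locally_eq; [filterlim_arith | ring].
Qed.

Lemma window_lo_lim : filterlim window_lo (at_right 0) (locally 0).
Proof.
  pose proof quad_coef_lim.
  eapply filterlim_locally_eq; [unfold window_lo; filterlim_arith | ring].
Qed.

Definition admissible e :=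
  0 < e <= 1 /\ 0 < lam e /\ 2 * C0 * lam e <= 1 / 2 /\
  0 < 2 * C0 * lam e - 3 * C3 * e ^ 2 /\ 0 < quad_coef e <= 1 / 4 /\
  window_lo e < / exp (2 * C0).

Lemma admissible_eventually : at_right 0 admissible.
Proof.
  assert (Hlam := filterlim_eventually_lt _ 0 (1 / (4 * C0)) hlam_lim
                    ltac:(apply Rdiv_lt_0_compat; lra)).
  assert (He := filterlim_eventually_lt _ 0 1 filterlim_at_right_id Rlt_0_1).
  assert (Hw := filterlim_eventually_lt _ 0 (1 / 4) quad_coef_lim ltac:(lra)).
  assert (Hr := filterlim_eventually_lt _ 0 (/ exp (2 * C0)) window_lo_lim
                  ltac:(apply Rinv_0_lt_compat, exp_pos)).
  generalize (filter_and _ _ denominator_eventually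
               (filter_and _ _ Hlam (filter_and _ _ He (filter_and _ _ Hw Hr)))).
  apply filter_imp; intros e ((He0 & Hl & _ & Hd) & Hl1 & He1 & Hw1 & Hr1).
  assert (Hw0 : 0 < quad_coef e).
  { unfold quad_coef; apply Rdiv_lt_0_compat; [| exact Hd].
    apply Rmult_lt_0_compat; [apply Rmult_lt_0_compat; [apply exp_pos | nra] | exact He0]. }
  assert (Hs : 2 * C0 * lam e <= 1 / 2).
  { apply (Rmult_lt_compat_l (4 * C0)) in Hl1; [| lra].
    replace (4 * C0 * (1 / (4 * C0))) with 1 in Hl1 by (field; lra); lra. }
  repeat split; lra.
Qed.

Lemma lower_endpoint_lim :
  filterlim (fun e => lam e * (exp (2 * C0) * window_lo e) / e) (at_right 0)
            (locally (C2 * exp (2 * C0) / (2 * C0))).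
Proof.
  apply filterlim_ext_loc
    with (fun e => exp (2 * C0) * (lam e * quad_coef e / e) * (1 + quad_coef e)).
  - generalize at_right_0_pos; apply filter_imp; intros e He.
    unfold window_lo; field; lra.
  - pose proof scaled_quad_coef_lim; pose proof quad_coef_lim.
    eapply filterlim_locally_eq; [filterlim_arith | field; lra].
Qed.

Lemma upper_endpoint_lim :
  filterlim (fun e => e * (/ exp (2 * C0) / window_lo e) / lam e) (at_right 0)
            (locally (2 * C0 / (C2 * exp (2 * C0)))).
Proof.
  apply filterlim_ext_loc
    with (fun e => / exp (2 * C0) / ((lam e * quad_coef e / e) * (1 + quad_coef e))).
  - generalize admissible_eventually; apply filter_imp; intros e (He & Hl & _ & _ & Hw & _).
    pose proof (exp_pos (2 * C0)); unfold window_lo; field; repeat split; lra.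
  - pose proof scaled_quad_coef_lim; pose proof quad_coef_lim.
    pose proof (exp_pos (2 * C0)).
    eapply filterlim_locally_eq; [filterlim_arith |].
    + apply Rmult_integral_contrapositive; split; apply Rgt_not_eq; [| lra].
      apply Rdiv_lt_0_compat; lra.
    + field; repeat split; lra.
Qed.

Lemma window_lo_pos e : admissible e -> 0 < window_lo e.
Proof. intros (_ & _ & _ & _ & Hw & _); unfold window_lo; nra. Qed.

Lemma Qact_Dact_le_on_window e a b al be ga de k x : admissible e ->
  0 < k -> Rabs (ln k) <= C0 ->
  Rabs al <= C3 -> Rabs be <= C3 -> Rabs ga <= C3 -> Rabs de <= C3 -> a + Rabs b <= C2 ->
  exp (2 * C0) * window_lo e <= x <= / exp (2 * C0) / window_lo e ->
  le_RP1 (Qact e a b al be ga de (Dact k (Some x))) (exp (2 * C0 * lam e) * (k ^ 2 * x)).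
Proof.
  intros Hadm Hk Hlnk Hal Hbe Hga Hde Hab Hx.
  pose proof (window_lo_pos e Hadm) as Hr.
  destruct Hadm as (He & Hl & Hs & Hd & Hw & _).
  set (w := quad_coef e) in *; set (y := k ^ 2 * x).
  assert (Hy : window_lo e <= y <= / window_lo e)
    by exact (scaled_window k x _ _ Hr (exp_pos _) (pow2_bounds_of_Rabs_ln k C0 Hk Hlnk) Hx).
  assert (Hquad : w * (y ^ 2 + 1) <= y).
  { apply (quadratic_le_on_window w (window_lo e)); [exact Hr | | exact Hy].
    apply quadratic_le_at_perturbed_coef; lra. }
  apply Qact_Some_le with (C2 := C2) (C3 := C3) (s := 2 * C0 * lam e); try assumption; try lra.
  - nra.
  - pose proof (exp_ineq1_le (2 * C0 * lam e)); pose proof (exp_le_2 (2 * C0 * lam e)); nra.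
  - replace (exp (2 * C0 * lam e) * (C2 + e * C3) * e) with (w * (2 * C0 * lam e - 3 * C3 * e ^ 2))
      by (unfold w, quad_coef; field; lra).
    nra.
Qed.

End Window.

Theorem lemma6 (C0 C2 C3 : R) (lam : R -> R)
  (hC0 : 0 < C0) (hC2 : 0 < C2) (hC3 : 0 < C3)
  (hlam_pos : forall eps, 0 < eps -> 0 < lam eps)
  (hlam_lim : filterlim lam (at_right 0) (locally 0))
  (hlam_log : filterlim (fun eps => ln (lam eps) / ln eps) (at_right 0) (locally 0)) :
  exists xm xp : R -> R,
    filterlim (fun eps => lam eps * xm eps / eps) (at_right 0)
              (locally (C2 * exp (2 * C0) / (2 * C0))) /\
    filterlim (fun eps => eps * xp eps / lam eps) (at_right 0)
              (locally (2 * C0 / (C2 * exp (2 * C0)))) /\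
    exists eps0 : R, 0 < eps0 /\
      forall eps : R, 0 < eps < eps0 ->
        0 < xm eps < xp eps /\
        forall (C1 : R) (Sigma : Type)
               (a b kappa : Sigma -> R)
               (alpha beta gamma delta : Sigma -> R -> R),
          0 < C1 ->
          (forall s, 0 < kappa s) ->
          (forall s, Rabs (ln (kappa s)) <= C0) ->
          (forall s, a s - Rabs (b s) >= C1) ->
          (forall s, a s + Rabs (b s) <= C2) ->
          (forall s e, Rabs e <= 1 ->
             opnorm_le (alpha s e) (beta s e) (gamma s e) (delta s e) C3) ->
          forall (s : Sigma) (x : R), xm eps <= x <= xp eps ->
            le_RP1 (Qact eps (a s) (b s) (alpha s eps) (beta s eps)
                         (gamma s eps) (delta s eps)
                         (Dact (kappa s) (Some x)))
                   (exp (2 * C0 * lam eps) * (kappa s ^ 2 * x)).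
Proof.
  pose proof (ratio_lim_of_ln_ratio lam hlam_pos hlam_lim hlam_log) as hratio.
  exists (fun e => exp (2 * C0) * window_lo C0 C2 C3 lam e),
         (fun e => / exp (2 * C0) / window_lo C0 C2 C3 lam e).
  split; [apply lower_endpoint_lim; assumption |].
  split; [apply upper_endpoint_lim; assumption |].
  assert (Hev : at_right 0 (admissible C0 C2 C3 lam)) by (apply admissible_eventually; assumption).
  destruct (at_right_0_interval _ Hev) as (eps0 & Heps0 & Hadm).
  exists eps0; split; [exact Heps0 |].
  intros e He; specialize (Hadm e He).
  split.
  - apply scaled_endpoints_lt; [apply exp_pos |].
    split; [exact (window_lo_pos C0 C2 C3 lam e Hadm) | apply Hadm].
  -
    intros C1 Sigma a b kappa alpha beta gamma delta _ Hk Hlnk _ Hab Hop s x Hx.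
    destruct (opnorm_le_entries _ _ _ _ _ (Hop s e ltac:(apply Rabs_le; destruct Hadm; lra)))
      as (Hal & Hbe & Hga & Hde).
    apply (Qact_Dact_le_on_window C0 C2 C3 lam); auto.
Qed.
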